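(* Let $\Omega$ be the closure of a bounded domain in $\mathbb{R}^d$, let $X$ be a Banach space of functions on $\Omega$ with $C(\Omega)\subset X$ and $\|g\|_X\le C_X\|g\|_{C(\Omega)}$ for $g\in C(\Omega)$, and let $K$ be a compact subset of $C(\Omega)$. Let ${\bf x}=(x_1,\dots,x_m)\in\Omega^m$, $f\in K$, $0<\gamma\le1$, and let $\tilde w=\lambda_{\bf x}(f)+\boldsymbol\eta$ with $\boldsymbol\eta\in\mathbb{R}^m$, $\|\boldsymbol\eta\|\le\gamma$. Assume $R(K(\tilde w,\gamma))_X\neq0$. For $\tau>0$ define on $C(\Omega)$ $$\mathcal{L}_{K,\tau}(g):=\tau\|\tilde w-\lambda_{\bf x}(g)\|+\operatorname{dist}(g,K)_{C(\Omega)} .$$ Then for every $C>2$ there is $\tau_0>0$ such that for all $0<\tau\le\tau_0$, all $\delta$ with $0<\delta\le\tau^2$, all $\Sigma\subset C(\Omega)$ with $\operatorname{dist}(K,\Sigma)_{C(\Omega)}<\delta$, and any minimizer $\hat f\in\mathop{\rm argmin}_{g\in\Sigma}\mathcal{L}_{K,\tau}(g)$, $$\|f-\hat f\|_X\le C\,R(K(\tilde w,\gamma))_X .$$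
   Context: $\lambda_{\bf x}(g):=(g(x_1),\dots,g(x_m))$; on $\mathbb{R}^m$, $\|v\|:=\big[\frac1m\sum_{j=1}^m|v_j|^2\big]^{1/2}$. $\operatorname{dist}(g,K)_{C(\Omega)}:=\inf_{h\in K}\|g-h\|_{C(\Omega)}$; for $A,B\subset C(\Omega)$, $\operatorname{dist}(A,B)_{C(\Omega)}:=\sup_{a\in A}\inf_{b\in B}\|a-b\|_{C(\Omega)}$. $K_{w'}:=\{h\in K:\lambda_{\bf x}(h)=w'\}$, $K(w,\varepsilon):=\bigcup_{w'\in\mathbb{R}^m,\ \|w'-w\|\le\varepsilon}K_{w'}$. For $S\subset X$, $R(S)_X:=\inf\{r:\ S\subset B(z,r)_X\text{ for some }z\in X\}$ (Chebyshev radius in $X$). *)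

From HB Require Import structures.
From mathcomp Require Import all_boot all_order all_algebra.
From mathcomp Require Import all_classical all_reals all_analysis.
Set Implicit Arguments. Unset Strict Implicit. Unset Printing Implicit Defensive.
Import Order.TTheory GRing.Theory Num.Theory.
Import numFieldNormedType.Exports.
Local Open Scope classical_set_scope.
Local Open Scope ring_scope.

Section Defs.
Variables (R : realType) (d m : nat).
Notation pt := 'rV[R]_d.

Definition closure_of_bounded_domain (Om : set pt) : Prop :=
  exists D : set pt, [/\ open D, connected D, D !=set0, bounded_set D
                       & Om = closure D].

(* C(Omega): functions continuous on Omega (identified when equal on Omega) *)
Definition CO (Om : set pt) : set (pt -> R) :=
  [set g | {within Om, continuous g}].

Definition normC (Om : set pt) (g : pt -> R) : R :=
  sup [set `|g y| | y in Om].

Definition lam (x : 'I_m -> pt) (g : pt -> R) : 'I_m -> R := fun i => g (x i).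

Definition vnorm (v : 'I_m -> R) : R :=
  Num.sqrt ((m%:R)^-1 * \sum_(i < m) v i ^+ 2).

Definition distC (Om : set pt) (g : pt -> R) (K : set (pt -> R)) : R :=
  inf [set normC Om (g \- h) | h in K].

Definition distCS (Om : set pt) (A B : set (pt -> R)) : R :=
  sup [set inf [set normC Om (a \- b) | b in B] | a in A].

Definition Kw (x : 'I_m -> pt) (K : set (pt -> R)) (w' : 'I_m -> R) :=
  [set h | K h /\ lam x h = w'].

Definition Kweps (x : 'I_m -> pt) (K : set (pt -> R)) (w : 'I_m -> R) (eps : R) :=
  \bigcup_(w' in [set w' : 'I_m -> R | vnorm (w' \- w) <= eps]) Kw x K w'.

Definition LKtau (Om : set pt) (x : 'I_m -> pt) (K : set (pt -> R))
  (wt : 'I_m -> R) (tau : R) (g : pt -> R) : R :=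
  tau * vnorm (wt \- lam x g) + distC Om g K.

End Defs.

Definition cheb_radius (R : realType) (V : normedModType R) (S : set V) : R :=
  inf [set r : R | exists z : V, forall s, S s -> `|s - z| <= r].

(* Let R be the Chebyshev radius of j(K(w~, gamma)) and z a center up to an
   error eps.  On the compact set K the continuous function
   h |-> max (||lam_x h - w~|| - gamma, R + 2 eps - ||j h - z||) is positive, so it is
   bounded below by some c > 0: every h in K with data misfit below gamma + c
   satisfies ||j h - z|| < R + 2 eps.  A minimizer fh of L_{K,tau} over Sigma does
   at least as well as an element of Sigma that is delta-close to f; with
   delta <= tau^2 this gives dist(fh, K) < 4 tau and a misfit of fh at most
   gamma + 2 tau, so some h in K with ||fh - h|| < 4 tau has misfit below
   gamma + 6 tau <= gamma + c.  Then ||f - fh||_X <= ||j f - z|| + ||j h - z||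
   + C_X ||h - fh|| <= 2 R + 4 eps, which is C R for eps = (C - 2) R / 4. *)

From mathcomp Require Import all_boot all_order all_algebra.
From mathcomp Require Import all_classical all_reals all_analysis.
From mathcomp Require Import ring lra.
Set Implicit Arguments. Unset Strict Implicit. Unset Printing Implicit Defensive.
Import Order.TTheory GRing.Theory Num.Theory.
Import numFieldNormedType.Exports.
Local Open Scope classical_set_scope.
Local Open Scope ring_scope.

Section EuclideanNorm.
Variables (R : realType) (m : nat).
Implicit Types (a b u v : 'I_m -> R).

Definition l2norm v := Num.sqrt (\sum_(i < m) v i ^+ 2).

Lemma sumr_sqr_ge0 v : 0 <= \sum_(i < m) v i ^+ 2.
Proof. by apply: sumr_ge0 => i _; exact: sqr_ge0. Qed.

Lemma sqr_sum_mul_le a b :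
  (\sum_(i < m) a i * b i) ^+ 2 <= (\sum_(i < m) a i ^+ 2) * \sum_(i < m) b i ^+ 2.
Proof.
have double_sum (p q : 'I_m -> R) : (\sum_i p i) * (\sum_k q k) = \sum_i \sum_k p i * q k.
  by rewrite mulr_suml; apply: eq_bigr => i _; rewrite mulr_sumr.
rewrite -(ler_pM2l (ltr0Sn R 1)).
have -> : 2 * (\sum_i a i * b i) ^+ 2 = \sum_i \sum_k 2 * (a i * b i * (a k * b k)).
  by rewrite expr2 double_sum mulr_sumr; apply: eq_bigr => i _; rewrite mulr_sumr.
have -> : 2 * ((\sum_i a i ^+ 2) * \sum_i b i ^+ 2) =
    \sum_i \sum_k (a i ^+ 2 * b k ^+ 2 + b i ^+ 2 * a k ^+ 2).
  rewrite mulr2n mulrDl mul1r {2}(mulrC (\sum_i a i ^+ 2)) !double_sum -big_split /=.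
  by apply: eq_bigr => i _; rewrite -big_split.
apply: ler_sum => i _; apply: ler_sum => k _.
rewrite -subr_ge0 (_ : _ - _ = (a i * b k - a k * b i) ^+ 2); first exact: sqr_ge0.
by ring.
Qed.

Lemma cauchy_schwarz a b : \sum_(i < m) a i * b i <= l2norm a * l2norm b.
Proof.
apply: le_trans (ler_norm _) _.
rewrite -sqrtr_sqr -sqrtrM ?sumr_sqr_ge0 // ler_sqrt; last first.
  by rewrite mulr_ge0 ?sumr_sqr_ge0.
exact: sqr_sum_mul_le.
Qed.

Lemma l2normD u v : l2norm (u \+ v) <= l2norm u + l2norm v.
Proof.
have ge0 : 0 <= l2norm u + l2norm v by rewrite addr_ge0 ?sqrtr_ge0.
rewrite -(ger0_norm ge0) -sqrtr_sqr ler_sqrt ?sqr_ge0 // sqrrD !sqr_sqrtr ?sumr_sqr_ge0 //.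
have -> : \sum_i (u \+ v) i ^+ 2 =
    \sum_i u i ^+ 2 + 2 * \sum_i u i * v i + \sum_i v i ^+ 2.
  by rewrite mulr_sumr -!big_split /=; apply: eq_bigr => i _; ring.
by have := cauchy_schwarz u v; lra.
Qed.

Lemma vnormE v : vnorm v = Num.sqrt (m%:R^-1) * l2norm v.
Proof. by rewrite /vnorm sqrtrM // invr_ge0 ler0n. Qed.

Lemma vnorm_ge0 v : 0 <= vnorm v.
Proof. exact: sqrtr_ge0. Qed.

Lemma vnormD u v : vnorm (u \+ v) <= vnorm u + vnorm v.
Proof. by rewrite !vnormE -mulrDr ler_wpM2l ?sqrtr_ge0 ?l2normD. Qed.

Lemma eq_vnorm u v : (forall i, `|u i| = `|v i|) -> vnorm u = vnorm v.
Proof.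
move=> uv; rewrite /vnorm; congr (Num.sqrt (_ * _)); apply: eq_bigr => i _.
by rewrite -(real_normK (num_real (u i))) uv real_normK ?num_real.
Qed.

Lemma vnorm_distrC u v : vnorm (u \- v) = vnorm (v \- u).
Proof. by apply: eq_vnorm => i; rewrite distrC. Qed.

Lemma vnorm_le (c : R) v : (0 < m)%N -> (forall i, `|v i| <= c) -> vnorm v <= c.
Proof.
move=> m_gt0 vc; have c_ge0 : 0 <= c by apply: le_trans (vc (Ordinal m_gt0)).
rewrite /vnorm -(ger0_norm c_ge0) -sqrtr_sqr ler_sqrt ?sqr_ge0 //.
rewrite ler_pdivrMl ?ltr0n //.
have -> : m%:R * c ^+ 2 = \sum_(i < m) c ^+ 2 by rewrite sumr_const card_ord mulr_natl.
apply: ler_sum => i _; rewrite -real_normK ?num_real //.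
by have := vc i; have := normr_ge0 (v i); nra.
Qed.

End EuclideanNorm.

Section SupNorm.
Variables (R : realType) (d : nat) (Om : set 'rV[R]_d).
Notation pt := 'rV[R]_d.
Implicit Types (g h k : pt -> R) (K S : set (pt -> R)).

Lemma normC_ge0 g : 0 <= normC Om g.
Proof.
have [sup_g|nsup] := pselect (has_sup [set `|g y| | y in Om]).
  case: (sup_g) => -[_ [y Oy _]] _.
  by apply: le_trans (normr_ge0 (g y)) _; apply: sup_upper_bound => //; exists y.
by rewrite /normC sup_out.
Qed.

Lemma normC_le g M : 0 <= M -> (forall y, Om y -> `|g y| <= M) -> normC Om g <= M.
Proof.
move=> M_ge0 gM; rewrite /normC.
have [->|ne] := eqVneq [set `|g y| | y in Om] set0; first by rewrite sup0.
by apply: ge_sup; [exact/set0P | move=> _ [y Oy <-]; exact: gM].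
Qed.

Lemma normC_distrC g h : normC Om (g \- h) = normC Om (h \- g).
Proof.
rewrite /normC; congr sup.
by apply/seteqP; split => _ [y Oy <-]; exists y => //=; rewrite distrC.
Qed.

Lemma distC_ge0 g K : K !=set0 -> 0 <= distC Om g K.
Proof.
move=> K0; apply: lb_le_inf; first exact: image_nonempty.
by move=> _ [h _ <-]; exact: normC_ge0.
Qed.

Lemma distC_le g K h : K h -> distC Om g K <= normC Om (g \- h).
Proof.
move=> Kh; apply: ge_inf; last by exists h.
by exists 0 => _ [k _ <-]; exact: normC_ge0.
Qed.

Lemma distC_lt g K e : K !=set0 -> distC Om g K < e ->
  exists2 h, K h & normC Om (g \- h) < e.
Proof.
by move=> K0 /(inf_lt (image_nonempty _ K0))[_ [h Kh <-] lt]; exists h.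
Qed.

Lemma lipschitz_within_continuous K (Psi : (pt -> R) -> R) (L : R) :
  (forall g h, K g -> K h -> `|Psi g - Psi h| <= L * normC Om (g \- h)) ->
  {within (K : set {uniform` Om -> R}), continuous Psi}.
Proof.
move=> PsiL; apply/subspace_continuousP => g Kg; apply/cvgrPdist_lt => e e_gt0.
have L1_gt0 : 0 < `|L| + 1 by rewrite ltr_wpDl.
pose r := e / (`|L| + 1); have r_gt0 : 0 < r by rewrite divr_gt0.
have : nbhs (g : {uniform` Om -> R}) [set h | forall y, Om y -> `|g y - h y| < r].
  apply/uniform_nbhs; exists [set yz | ball yz.1 r yz.2]; split.
    by rewrite -entourage_ballE; exists r.
  by move=> h /= gh y Oy; have := gh y Oy; rewrite -ball_normE.
apply: filterS => h gh Kh; apply: le_lt_trans (PsiL g h Kg Kh) _.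
have ghr : normC Om (g \- h) <= r by apply: normC_le => [|y Oy]; rewrite ltW ?gh.
apply: le_lt_trans (ler_wpM2r (normC_ge0 _) (ler_norm L)) _.
apply: le_lt_trans (ler_wpM2l (normr_ge0 L) ghr) _.
by rewrite -[X in _ < X](divfK (lt0r_neq0 L1_gt0)) mulrC ltr_pM2l // ltrDl.
Qed.

Section CompactDomain.
Hypothesis cOm : compact Om.

Lemma ler_normC g y : CO Om g -> Om y -> `|g y| <= normC Om g.
Proof.
move=> cg Oy; apply: ub_le_sup; last by exists y.
have /compact_bounded/ex_strict_bound_gt0[M _ gM] := continuous_compact cg cOm.
by exists M => _ [z Oz <-]; apply/ltW/gM; exists z.
Qed.

Lemma normC_triangle g h k : CO Om g -> CO Om h -> CO Om k ->
  normC Om (g \- k) <= normC Om (g \- h) + normC Om (h \- k).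
Proof.
move=> cg ch ck; apply: normC_le => [|y Oy]; first by rewrite addr_ge0 ?normC_ge0.
apply: le_trans (ler_distD (h y) (g y) (k y)) _.
by apply: lerD; apply: ler_normC => //; exact: within_continuousB.
Qed.

Lemma vnorm_lam_le (m : nat) (x : 'I_m -> pt) g : (0 < m)%N ->
  (forall i, Om (x i)) -> CO Om g -> vnorm (lam x g) <= normC Om g.
Proof. by move=> m_gt0 xOm cg; apply: vnorm_le => // i; exact: ler_normC. Qed.

Lemma distC_lipschitz g h S : S !=set0 -> S `<=` CO Om -> CO Om g -> CO Om h ->
  `|distC Om g S - distC Om h S| <= normC Om (g \- h).
Proof.
move=> S0 SCO cg ch.
have half g' h' : CO Om g' -> CO Om h' ->
    distC Om g' S - normC Om (g' \- h') <= distC Om h' S.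
  move=> cg' ch'; apply: lb_le_inf; first exact: image_nonempty.
  move=> _ [b Sb <-]; rewrite lerBlDl.
  exact: le_trans (distC_le _ Sb) (normC_triangle cg' ch' (SCO b Sb)).
have := half g h cg ch; have := half h g ch cg; rewrite normC_distrC ler_norml.
by move=> ? ?; apply/andP; split; lra.
Qed.

Lemma distCS_lt K S a e : compact (K : set {uniform` Om -> R}) ->
  K `<=` CO Om -> S `<=` CO Om -> S !=set0 -> K a -> distCS Om K S < e ->
  exists2 b, S b & normC Om (a \- b) < e.
Proof.
move=> cK KCO SCO S0 Ka KS_lt; apply: distC_lt => //; apply: le_lt_trans KS_lt.
have cont : {within (K : set {uniform` Om -> R}), continuous (distC Om ^~ S)}.
  apply: (lipschitz_within_continuous (L := 1)) => g h Kg Kh.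
  by rewrite mul1r; apply: distC_lipschitz => //; apply: KCO.
have [_ ub] := compact_has_sup (image_nonempty _ (ex_intro _ a Ka))
  (continuous_compact cont cK).
by apply: ub_le_sup ub _ _; exists a.
Qed.

End CompactDomain.
End SupNorm.

Lemma compact_margin (R : realType) (T : topologicalType) (K : set T)
    (Phi Psi : T -> R) (p a b : R) :
  compact K -> {within K, continuous Phi} -> {within K, continuous Psi} -> a < b ->
  (forall t, K t -> Phi t <= p -> Psi t <= a) ->
  exists2 c, 0 < c & forall t, K t -> Phi t < p + c -> Psi t < b.
Proof.
move=> cK cPhi cPsi ab PhiPsi.
have [-> | /set0P K_ne0] := eqVneq K set0; first by exists 1.
pose Theta := (fun t => Phi t - p) \max (fun t => b - Psi t).
have cTheta : {within K, continuous Theta}.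
  move=> t; apply: continuous_max.
    by apply: cvgB; [exact: cPhi | exact: cvg_cst].
  by apply: cvgB; [exact: cvg_cst | exact: cPsi].
have [t0 /set_mem Kt0 Theta_min] := compact_EVT_min K_ne0 cK cTheta.
(* [Theta] is positive on [K], hence bounded below there by its minimum. *)
have Theta0_gt0 : 0 < Theta t0.
  rewrite /Theta /= lt_max subr_gt0 subr_gt0.
  have [/(PhiPsi _ Kt0) Psia|pPhi] := leP (Phi t0) p; apply/orP; [right|by left].
  exact: le_lt_trans Psia ab.
exists (Theta t0) => // t Kt Phit; have := Theta_min t (mem_set Kt).
by rewrite {2}/Theta /= le_max => /orP[|]; lra.
Qed.

Lemma closure_bounded_compact (R : realType) (n : nat) (D : set 'rV[R]_n) :
  bounded_set D -> compact (closure D).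
Proof.
move=> /ex_strict_bound_gt0[M _ /= DM].
pose B := closed_ball_ Num.norm (0 : 'rV[R]_n) M.
have cB : closed B by exact: closed_closed_ball_.
have cptB : compact B.
  apply: bounded_closed_compact cB; exists M; split => [|r Mr y]; first exact: num_real.
  by rewrite /B /closed_ball_ /= sub0r normrN => /le_trans; apply; rewrite ltW.
apply: (subclosed_compact _ cptB); first exact: closed_closure.
rewrite (closure_id B).1 //; apply: closureS => y /DM.
by rewrite /B /closed_ball_ /= sub0r normrN => /ltW.
Qed.

Section ChebyshevRadius.
Variables (R : realType) (V : normedModType R).
Implicit Types S : set V.

Lemma cheb_radius_ge0 S : S !=set0 -> 0 <= cheb_radius S.
Proof.
move=> [s Ss]; rewrite /cheb_radius.
have [->|/set0P ne] := eqVneq [set r : R | exists z : V, forall s, S s -> `|s - z| <= r] set0.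
  by rewrite inf0.
by apply: lb_le_inf => // r [z zr]; exact: le_trans (zr _ Ss).
Qed.

Lemma cheb_radius_near_center S e : cheb_radius S != 0 -> 0 < e ->
  exists z, forall s, S s -> `|s - z| <= cheb_radius S + e.
Proof.
rewrite /cheb_radius => rS_neq0 e_gt0.
set E := [set r : R | _] in rS_neq0 *.
have /set0P E_ne0 : E != set0 by apply: contra rS_neq0 => /eqP ->; rewrite inf0.
have lt_e : inf E < inf E + e by rewrite ltrDl.
have [r [z zr] lt_r] := inf_lt E_ne0 lt_e.
by exists z => s Ss; exact: le_trans (zr _ Ss) (ltW lt_r).
Qed.

End ChebyshevRadius.

Lemma raddfB_CO (R : realType) (d : nat) (Om : set 'rV[R]_d)
    (V : lmodType R) (j : ('rV[R]_d -> R) -> V) :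
  (forall g h, CO Om g -> CO Om h -> j (g \+ h) = j g + j h) ->
  (forall (a : R) g, CO Om g -> j (fun y => a * g y) = a *: j g) ->
  forall g h, CO Om g -> CO Om h -> j (g \- h) = j g - j h.
Proof.
move=> j_add j_scale g h cg ch.
have cNh : CO Om (fun y => -1 * h y).
  have -> : (fun y => -1 * h y) = (fun=> 0) \- h by apply/funext => y /=; rewrite mulN1r sub0r.
  by apply: within_continuousB => //; apply: continuous_subspaceT; exact: cst_continuous.
have -> : g \- h = g \+ (fun y => -1 * h y) by apply/funext => y /=; rewrite mulN1r.
by rewrite j_add // j_scale // scaleN1r.
Qed.

Section Recovery.
Variables (R : realType) (d m : nat) (Om : set 'rV[R]_d) (V : normedModType R).
Variables (j : ('rV[R]_d -> R) -> V) (CX : R) (K : set ('rV[R]_d -> R)).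
Variables (x : 'I_m -> 'rV[R]_d) (wt : 'I_m -> R).
Hypotheses (cOm : compact Om) (m_gt0 : (0 < m)%N) (xOm : forall i, Om (x i)).
Hypothesis jB : forall g h, CO Om g -> CO Om h -> j (g \- h) = j g - j h.
Hypothesis j_le : forall g, CO Om g -> `|j g| <= CX * normC Om g.
Hypotheses (KCO : K `<=` CO Om) (cK : compact (K : set {uniform` Om -> R})).
Notation pt := 'rV[R]_d.

Lemma ler_dist_j g h : CO Om g -> CO Om h -> `|j g - j h| <= CX * normC Om (g \- h).
Proof. by move=> cg ch; rewrite -jB // j_le //; exact: within_continuousB. Qed.

Lemma lam_misfit_le g h : CO Om g -> CO Om h ->
  vnorm (lam x h \- wt) <= vnorm (lam x g \- wt) + normC Om (g \- h).
Proof.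
move=> cg ch; have -> : lam x h \- wt = (lam x g \- wt) \+ lam x (h \- g).
  by apply/funext => i; rewrite /lam /=; ring.
apply: le_trans (vnormD _ _) _; rewrite lerD2l normC_distrC.
by apply: vnorm_lam_le => //; exact: within_continuousB.
Qed.

Lemma within_continuous_misfit :
  {within (K : set {uniform` Om -> R}), continuous (fun h => vnorm (lam x h \- wt))}.
Proof.
apply: (lipschitz_within_continuous (L := 1)) => g h Kg Kh; rewrite mul1r.
have := lam_misfit_le (KCO Kg) (KCO Kh); have := lam_misfit_le (KCO Kh) (KCO Kg).
by rewrite normC_distrC ler_norml => ? ?; apply/andP; split; lra.
Qed.

Lemma within_continuous_dist_j (z : V) :
  {within (K : set {uniform` Om -> R}), continuous (fun h => `|j h - z|)}.
Proof.
apply: (lipschitz_within_continuous (L := CX)) => g h Kg Kh.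
apply: le_trans (ler_dist_dist _ _) _; rewrite opprB addrA subrK.
exact: ler_dist_j (KCO Kg) (KCO Kh).
Qed.

Lemma Kweps_margin (gamma a b : R) (z : V) : a < b ->
  (forall s, Kweps x K wt gamma s -> `|j s - z| <= a) ->
  exists2 c, 0 < c & forall h, K h -> vnorm (lam x h \- wt) < gamma + c -> `|j h - z| < b.
Proof.
move=> ab Sa.
have [|c c_gt0 margin] := compact_margin (p := gamma) cK within_continuous_misfit
  (within_continuous_dist_j (z := z)) ab.
  by move=> h Kh h_gamma; apply: Sa; exists (lam x h).
by exists c.
Qed.

Lemma LKtau_le_near (f g : pt -> R) (tau : R) : K f -> CO Om g -> 0 <= tau ->
  LKtau Om x K wt tau g <=
    tau * (vnorm (lam x f \- wt) + normC Om (f \- g)) + normC Om (f \- g).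
Proof.
move=> Kf cg tau_ge0; rewrite /LKtau vnorm_distrC.
apply: lerD; first by apply: ler_wpM2l => //; apply: lam_misfit_le => //; exact: KCO.
by rewrite normC_distrC distC_le.
Qed.

Lemma LKtau_argmin_near_K (gamma tau delta : R) (f fh : pt -> R) (Sigma : set (pt -> R)) :
  K f -> vnorm (lam x f \- wt) <= gamma -> gamma <= 1 ->
  0 < tau <= 1 -> 0 < delta <= tau ^+ 2 ->
  Sigma `<=` CO Om -> distCS Om K Sigma < delta -> Sigma fh ->
  (forall g, Sigma g -> LKtau Om x K wt tau fh <= LKtau Om x K wt tau g) ->
  exists2 h, K h & normC Om (fh \- h) < 4 * tau /\ vnorm (lam x h \- wt) < gamma + 6 * tau.
Proof.
move=> Kf f_gamma gamma_le1 /andP[tau_gt0 tau_le1] /andP[delta_gt0 delta_le] SCO KS Sfh fh_min.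
have [g Sg fg] := distCS_lt cOm cK KCO SCO (ex_intro _ fh Sfh) Kf KS.
(* [fh] does at least as well as [g], which is [delta]-close to [f]. *)
have := le_trans (fh_min g Sg) (LKtau_le_near Kf (SCO g Sg) (ltW tau_gt0)).
rewrite /LKtau vnorm_distrC mulrDr.
set v := vnorm (lam x fh \- wt); set D := distC Om fh K; set n := normC Om (f \- g) in fg *.
move=> L_fh; have tau_v : 0 <= tau * v by rewrite mulr_ge0 ?vnorm_ge0 // ltW.
have n_ge0 : 0 <= n := normC_ge0 _ _.
have n_lt : n < tau * tau by rewrite -expr2 (lt_le_trans fg).
have tau2_le : tau * tau <= tau by rewrite ler_piMr // ltW.
have tau_vf : tau * vnorm (lam x f \- wt) <= tau * gamma by rewrite ler_wpM2l // ltW.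
have tau_gamma : tau * gamma <= tau by rewrite ler_piMr // ltW.
have tau_n : tau * n <= n by rewrite ler_piMl.
have [h Kh fh_h] : exists2 h, K h & normC Om (fh \- h) < 4 * tau.
  by apply: distC_lt; [exists f | lra].
have v_lt : v < gamma + 2 * tau.
  have D_ge0 : 0 <= D by apply: distC_ge0; exists f.
  by rewrite -(ltr_pM2l tau_gt0) mulrDr; lra.
exists h => //; split => //.
by have := lam_misfit_le (SCO fh Sfh) (KCO Kh); rewrite -/v; lra.
Qed.

Lemma argmin_recovery (f : pt -> R) (gamma r e : R) (z : V) :
  K f -> vnorm (lam x f \- wt) <= gamma -> gamma <= 1 -> 0 < e ->
  (forall s, Kweps x K wt gamma s -> `|j s - z| <= r) ->
  exists2 tau0, 0 < tau0 & forall tau delta Sigma fh,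
    0 < tau <= tau0 -> 0 < delta <= tau ^+ 2 ->
    Sigma `<=` CO Om -> distCS Om K Sigma < delta -> Sigma fh ->
    (forall g, Sigma g -> LKtau Om x K wt tau fh <= LKtau Om x K wt tau g) ->
    `|j f - j fh| <= 2 * r + 2 * e.
Proof.
move=> Kf f_gamma gamma_le1 e_gt0 z_center.
have [|c c_gt0 margin] := @Kweps_margin gamma r (r + e) z _ z_center; first by rewrite ltrDl.
have CX_gt0 : 0 < 4 * (`|CX| + 1) by rewrite mulr_gt0 // ltr_wpDl.
(* [c / 6] turns the misfit bound [gamma + 6 tau] into one usable by [margin];
   the last bound gives [CX * 4 tau <= e]. *)
exists (Num.min 1 (Num.min (c / 6) (e / (4 * (`|CX| + 1))))).
  by rewrite !lt_min; apply/and3P; split; [exact: ltr01 | exact: divr_gt0 | exact: divr_gt0].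
move=> tau delta Sigma fh /andP[tau_gt0]; rewrite !le_min => /and3P[tau_le1 tau_c tau_e].
move=> delta_range SCO KS Sfh fh_min.
have [h Kh [fh_h h_data]] := LKtau_argmin_near_K Kf f_gamma gamma_le1
  (introT andP (conj tau_gt0 tau_le1)) delta_range SCO KS Sfh fh_min.
have jfz : `|j f - z| <= r by apply: z_center; exists (lam x f).
have jhz : `|j h - z| < r + e.
  by apply: margin => //; move: tau_c; rewrite ler_pdivlMr //; lra.
have jfh_h : `|j fh - j h| <= e.
  apply: le_trans (ler_dist_j (SCO _ Sfh) (KCO Kh)) _.
  move: tau_e; rewrite ler_pdivlMr // => tau_e.
  by have := normC_ge0 Om (fh \- h); have := ler_norm CX; nra.
have := ler_distD z (j f) (j fh); have := ler_distD (j h) z (j fh).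
by rewrite (distrC z (j h)) (distrC (j h) (j fh)); lra.
Qed.

End Recovery.

Theorem theorem5p1 (R : realType) (d m : nat) (Om : set 'rV[R]_d)
  (V : completeNormedModType R) (j : ('rV[R]_d -> R) -> V) (CX : R)
  (K : set ('rV[R]_d -> R)) (x : 'I_m -> 'rV[R]_d) (f : 'rV[R]_d -> R)
  (gamma : R) (eta : 'I_m -> R) :
  closure_of_bounded_domain Om ->
  (* X: Banach space with C(Om) embedded linearly, injectively, continuously *)
  (forall g h, CO Om g -> CO Om h -> {in Om, g =1 h} -> j g = j h) ->
  (forall g h, CO Om g -> CO Om h -> j g = j h -> {in Om, g =1 h}) ->
  (forall g h, CO Om g -> CO Om h -> j (g \+ h) = j g + j h) ->
  (forall (a : R) g, CO Om g -> j (fun y => a * g y) = a *: j g) ->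
  (forall g, CO Om g -> `|j g| <= CX * normC Om g) ->
  (* K compact subset of C(Om) *)
  K `<=` CO Om ->
  compact (K : set {uniform` Om -> R}) ->
  (0 < m)%N ->
  (forall i, Om (x i)) ->
  K f ->
  0 < gamma <= 1 ->
  vnorm eta <= gamma ->
  let wt := lam x f \+ eta in
  cheb_radius (j @` Kweps x K wt gamma) != 0 ->
  forall C : R, 2 < C ->
  exists tau0 : R, 0 < tau0 /\
    forall tau : R, 0 < tau <= tau0 ->
    forall delta : R, 0 < delta <= tau ^+ 2 ->
    forall Sigma : set ('rV[R]_d -> R), Sigma `<=` CO Om ->
      distCS Om K Sigma < delta ->
    forall fh, Sigma fh ->
      (forall g, Sigma g -> LKtau Om x K wt tau fh <= LKtau Om x K wt tau g) ->
      `|j (f \- fh)| <= C * cheb_radius (j @` Kweps x K wt gamma).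
Proof.
move=> [D [_ _ _ bD ->]] _ _ j_add j_scale j_le KCO cK m_gt0 xOm Kf.
move=> /andP[_ gamma_le1] eta_le wt R0_neq0 C C_gt2.
set R0 := cheb_radius _ in R0_neq0 *.
have cOm := closure_bounded_compact bD.
have jB := raddfB_CO j_add j_scale.
have f_gamma : vnorm (lam x f \- wt) <= gamma.
  by rewrite (@eq_vnorm _ _ _ eta) // => i; rewrite /wt /lam /= opprD addNKr normrN.
have R0_gt0 : 0 < R0.
  rewrite lt_neqAle eq_sym R0_neq0 cheb_radius_ge0 //.
  by exists (j f), f => //; exists (lam x f).
pose eps := (C - 2) * R0 / 4.
have eps_gt0 : 0 < eps by rewrite divr_gt0 // mulr_gt0 // subr_gt0.
have [z z_center] := cheb_radius_near_center R0_neq0 eps_gt0.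
have [|tau0 tau0_gt0 recovery] := argmin_recovery cOm m_gt0 xOm jB j_le KCO cK
  Kf f_gamma gamma_le1 eps_gt0 (r := R0 + eps) (z := z).
  by move=> s Ss; apply: z_center; exists s.
exists tau0; split => // tau tau_range delta delta_range Sigma SCO KS fh Sfh fh_min.
rewrite jB; [|exact: KCO | exact: SCO].
have -> : C * R0 = 2 * (R0 + eps) + 2 * eps by rewrite /eps; field.
exact: recovery tau_range delta_range SCO KS Sfh fh_min.
Qed.
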